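(* Consider the linear difference equation in an unknown sequence $\{x(n)\}_{n \in \mathbb{Z}}$ \[ a_r(n) x(n + r) + \ldots + a_1(n) x(n + 1) + a_0(n) x(n) = 0 \quad \text{for every } n \in \mathbb{Z}, \] where $\{a_0(n)\}_{n\in\mathbb{Z}}, \ldots, \{a_r(n)\}_{n\in\mathbb{Z}}$ are arbitrary numerical sequences. Assume that the space $W$ of solutions of this equation whose support $\operatorname{supp}(\{x(n)\}) = \{i \in \mathbb{Z} \mid x(i) \neq 0\}$ is contained in $\mathbb{Z}_{\geqslant 0}$ is infinite-dimensional. Then there exists an index $J > 0$ such that this equation has a nonzero solution with support contained in $\{1, 2, \ldots, J\}$.
   Context: Solutions are two-sided numerical sequences indexed by $\mathbb{Z}$; the coefficients are arbitrary sequences (no nonvanishing assumption on $a_0$ or $a_r$), and the number $r$ is the order of the equation. The solution set is a vector space. *)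

From mathcomp Require Import all_boot all_order all_algebra.
Set Implicit Arguments. Unset Strict Implicit. Unset Printing Implicit Defensive.
Import Order.TTheory GRing.Theory Num.Theory.
Local Open Scope ring_scope.

Definition is_solution (K : fieldType) (r : nat) (a : nat -> int -> K)
  (x : int -> K) : Prop :=
  forall n : int, \sum_(i < r.+1) a i n * x (n + (i : nat)%:Z) = 0.

Definition supp_sub (K : fieldType) (x : int -> K) (S : int -> Prop) : Prop :=
  forall n : int, x n != 0 -> S n.

Definition lin_indep (K : fieldType) (m : nat) (f : 'I_m -> int -> K) : Prop :=
  forall c : 'I_m -> K,
    (forall n : int, \sum_(i < m) c i * f i n = 0) -> forall i, c i = 0.

Definition infinite_dimensional (K : fieldType) (W : (int -> K) -> Prop) : Prop :=
  forall m : nat, exists f : 'I_m -> int -> K,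
    (forall i, W (f i)) /\ lin_indep f.

From mathcomp Require Import all_boot all_order all_algebra.
From mathcomp Require Import zify.
From Stdlib Require Import Classical.
Import Order.TTheory GRing.Theory Num.Theory.
Local Open Scope ring_scope.

(* Take r + 2 independent solutions supported in Z_{>=0}.  Their evaluations
   on a long enough window [0, N] are already independent: the kernels of
   these evaluations form a decreasing chain of subspaces with trivial
   intersection, so they vanish from some N on.  With J = N + 1, a nonzero
   combination x vanishing at 0 and at J + 1, ..., J + r exists because there
   are more unknowns than conditions; x is nonzero somewhere on [0, N], and
   cutting x off after J gives a solution, since an equation centred at n <= J
   only sees values of x at indices <= J + r. *)

Lemma nonincreasing_nat_stable (u : nat -> nat) :
  {homo u : k l / (k <= l)%N >-> (l <= k)%N} ->
  exists N, forall n, (N <= n)%N -> u n = u N.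
Proof.
move=> u_noninc; suff: forall k N, u N = k -> exists N0, forall n,
    (N0 <= n)%N -> u n = u N0 by move/(_ (u 0%N) 0%N erefl).
elim/ltn_ind=> k IH N uN.
case: (classic (exists2 n, (N <= n)%N & u n != u N)) => [[n Nn un] | stable].
  by apply: (IH (u n)) erefl; rewrite -uN ltn_neqAle un u_noninc.
exists N => n Nn; apply/eqP; apply: contra_notT stable => un; by exists n.
Qed.

Lemma is_solution_truncate (K : fieldType) (r : nat) (a : nat -> int -> K)
    (x : int -> K) (J : int) :
  is_solution r a x -> (forall n, J < n <= J + r%:Z -> x n = 0) ->
  is_solution r a (fun n => if n <= J then x n else 0).
Proof.
move=> x_sol x_gap n; case: (lerP n J) => [n_le_J | J_lt_n].
  rewrite -[RHS](x_sol n); apply: eq_bigr => i _; case: lerP => // J_lt.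
  by rewrite x_gap ?mulr0 //; have := ltn_ord i; lia.
by rewrite big1 // => i _; rewrite ifF ?mulr0 //; apply/negbTE; lia.
Qed.

Section LinearCombinations.

Context {K : fieldType} {m : nat} (f : 'I_m -> int -> K).

Definition lincomb (c : 'rV[K]_m) (n : int) : K := \sum_i c 0 i * f i n.

Lemma lin_indep_rowP : lin_indep f ->
  forall c : 'rV_m, (forall n, lincomb c n = 0) -> c = 0.
Proof. by move=> f_indep c c0; apply/rowP => i; rewrite mxE; apply: f_indep. Qed.

Lemma is_solution_lincomb r a c :
  (forall i, is_solution r a (f i)) -> is_solution r a (lincomb c).
Proof.
move=> f_sol n; rewrite /lincomb.
under eq_bigr => k _ do rewrite big_distrr /=.
rewrite exchange_big big1 //= => i _.
under eq_bigr => k _ do rewrite mulrCA.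
by rewrite -big_distrr /= f_sol mulr0.
Qed.

Definition sample_mx {d : nat} (p : 'I_d -> int) : 'M[K]_(m, d) :=
  \matrix_(i, j) f i (p j).

Lemma sub_kermx_sample {d} (p : 'I_d -> int) (c : 'rV_m) :
  (c <= kermx (sample_mx p))%MS <-> forall j, lincomb c (p j) = 0.
Proof.
rewrite sub_kermx; split=> [/eqP/matrixP c0 j | c0].
  by have := c0 0 j; rewrite !mxE => <-; apply: eq_bigr => i _; rewrite mxE.
apply/eqP/rowP => j; rewrite !mxE -[RHS](c0 j).
by apply: eq_bigr => i _; rewrite mxE.
Qed.

Lemma exists_lincomb_vanishing {d} (p : 'I_d -> int) : (d < m)%N ->
  exists2 c : 'rV_m, c != 0 & forall j, lincomb c (p j) = 0.
Proof.
move=> d_lt_m; have : kermx (sample_mx p) != 0.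
  by rewrite -mxrank_eq0 mxrank_ker; have := rank_leq_col (sample_mx p); lia.
by case/rowV0Pn=> c /sub_kermx_sample c_p c_nz; exists c.
Qed.

Definition window_mx (N : nat) := sample_mx (fun j : 'I_N.+1 => (j : nat)%:Z).

Lemma sub_kermx_window N c :
  (c <= kermx (window_mx N))%MS <->
  forall k : nat, (k <= N)%N -> lincomb c k%:Z = 0.
Proof.
apply: (iff_trans (sub_kermx_sample _ c)); split=> [c0 k kN | c0 j].
  exact: (c0 (Ordinal (kN : (k < N.+1)%N))).
exact: c0 (ltn_ord j).
Qed.

Lemma kermx_windowS {N N'} :
  (N <= N')%N -> (kermx (window_mx N') <= kermx (window_mx N))%MS.
Proof.
move=> NN'; apply/rV_subP => c /sub_kermx_window c0.
by apply/sub_kermx_window => k kN; apply: c0; apply: leq_trans NN'.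
Qed.

Lemma lin_indep_window :
  (forall i n, n < 0 -> f i n = 0) -> lin_indep f ->
  exists N, forall c : 'rV_m,
    (forall k : nat, (k <= N)%N -> lincomb c k%:Z = 0) -> c = 0.
Proof.
move=> f_supp f_indep.
have [N stable] := @nonincreasing_nat_stable (fun N => \rank (kermx (window_mx N)))
  (fun _ _ NN' => mxrankS (kermx_windowS NN')).
exists N => c /sub_kermx_window cN.
have c_ker n : (c <= kermx (window_mx n))%MS.
  case: (leqP n N) => [nN | /ltnW Nn]; first exact: submx_trans cN (kermx_windowS nN).
  have := (mxrank_leqif_sup (kermx_windowS Nn)).2.
  by rewrite stable // eqxx => /esym; apply: submx_trans.
apply: lin_indep_rowP => // -[k | k]; first exact: (sub_kermx_window k c).1.
by apply: big1 => i _; rewrite f_supp ?mulr0.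
Qed.

End LinearCombinations.

Theorem lemma2 (K : fieldType) (r : nat) (a : nat -> int -> K) :
  infinite_dimensional
    (fun x : int -> K => is_solution r a x /\ supp_sub x (fun n => 0 <= n)) ->
  exists J : nat, (0 < J)%N /\
    exists x : int -> K,
      is_solution r a x /\ (exists n : int, x n != 0) /\
      supp_sub x (fun n => 1 <= n <= J%:Z).
Proof.
move=> /(_ r.+2) [f f_W].
have f_supp i n : n < 0 -> f i n = 0.
  by move=> n_neg; apply: contraTeq n_neg => /(f_W.1 i).2; rewrite -leNgt.
have [N f_window] := lin_indep_window f f_supp f_W.2.
pose J := N.+1.
pose p (k : 'I_r.+1) : int := if k == ord0 then 0 else (J + k)%N%:Z.
have [c c_nz c_p] := exists_lincomb_vanishing f p (ltnSn r.+1).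
pose x := lincomb f c.
have x_sol : is_solution r a x by apply: is_solution_lincomb => i; apply: (f_W.1 i).1.
have [k kN x_k] : exists2 k : nat, (k <= N)%N & x k%:Z != 0.
  apply: NNPP => x0; move/eqP: c_nz; apply; apply: f_window => k kN; apply/eqP.
  by apply: contra_notT x0 => x_k; exists k.
have x_gap t : J%:Z < t <= J%:Z + r%:Z -> x t = 0.
  move=> Jt; have t_lt : (`|t - J%:Z| < r.+1)%N by lia.
  have := c_p (Ordinal t_lt); rewrite /p -val_eqE /=; case: eqP => [|_]; first lia.
  have t_eq : t = (J + `|t - J%:Z|)%N%:Z by lia.
  by rewrite -t_eq.
exists J; split=> //; exists (fun n => if n <= J%:Z then x n else 0).
split; first exact: is_solution_truncate.
split; first by exists k%:Z; rewrite ifT //; lia.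
move=> n; case: ifP => [n_le_J x_n | _]; last by rewrite eqxx.
have n_ge0 : 0 <= n.
  by rewrite leNgt; apply: contra x_n => n_neg; apply/eqP/big1 => i _; rewrite f_supp ?mulr0.
have n_neq0 : n != 0 by apply: contra_neq x_n => ->; apply: (c_p ord0).
lia.
Qed.
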